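(* Let $n\ge 27$, $\mathcal{X},\mathcal{Y}$ finite with $|\mathcal{X}|,|\mathcal{Y}|\ge 2$, $\mathbf{X}$ a random vector on $\mathcal{X}^n$ and $\mathbf{Y}$ with $\mathbf{Y}|\mathbf{X}\sim p^n_{Y|X}$. Let $\lambda>0$ and $t\in\mathbb{N}_+$ with $\lambda t>n\log_2|\mathcal{Y}|$, and for $s\in[0:t]$ let $\mathcal{S}_{\mathbf{Y}}(s)=\{\mathbf{y}:p_{\mathbf{Y}}(\mathbf{y})>0,\ \lfloor\min(h_{\mathbf{Y}}(\mathbf{y})/\lambda,t)\rfloor=s\}$ and $\eta_s=p_{\mathbf{Y}}\left(\bigcup_{i=0}^s\mathcal{S}_{\mathbf{Y}}(i)\right)$. Then for each $s\in[0:t]$, $\bigcup_{i=0}^s\mathcal{S}_{\mathbf{Y}}(i)$ is the unique minimum $\eta_s$-quasi image of $\mathbf{X}$ by $p_{Y|X}$, and $$\log_2\bar g^n_{Y|X}(\mathbf{X},\eta_s)<s\lambda+\lambda+\log_2(t+1),\qquad \log_2\bar g^n_{Y|X}(\mathbf{X},\eta_s)\ge s\lambda+\log_2 p_{\mathbf{Y}}(\mathcal{S}_{\mathbf{Y}}(s)).$$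
   Context: $h_{\mathbf{Y}}(\mathbf{y})=-\log_2 p_{\mathbf{Y}}(\mathbf{y})$. For $\eta\in(0,1]$, a set $\mathcal{B}\subseteq\mathcal{Y}^n$ is an $\eta$-quasi image of $\mathbf{X}$ by $p_{Y|X}$ if $\sum_{\mathbf{x}}p^n_{Y|X}(\mathcal{B}|\mathbf{x})p_{\mathbf{X}}(\mathbf{x})\ge\eta$; $\bar g^n_{Y|X}(\mathbf{X},\eta)$ is the minimum cardinality of such a set, and a minimum $\eta$-quasi image is one achieving it. *)

From mathcomp Require Import all_boot all_order all_algebra.
From mathcomp Require Import reals exp.
Set Implicit Arguments. Unset Strict Implicit. Unset Printing Implicit Defensive.
Import Order.TTheory GRing.Theory Num.Theory.
Local Open Scope ring_scope.

Section Defs.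
Variables (R : realType) (X Y : finType) (n : nat).
Variables (pX : {ffun n.-tuple X -> R}) (W : X -> Y -> R).

(* base-2 logarithm (note: mathcomp's ln 0 = 0) *)
Definition log2 (a : R) : R := ln a / ln 2.

Definition Wn (x : n.-tuple X) (y : n.-tuple Y) : R :=
  \prod_(i < n) W (tnth x i) (tnth y i).

Definition WnB (x : n.-tuple X) (B : {set n.-tuple Y}) : R :=
  \sum_(y in B) Wn x y.

Definition pY (y : n.-tuple Y) : R := \sum_x pX x * Wn x y.

Definition PY (B : {set n.-tuple Y}) : R := \sum_(y in B) pY y.

Definition hY (y : n.-tuple Y) : R := - log2 (pY y).

Definition quasi_image (eta : R) (B : {set n.-tuple Y}) : bool :=
  eta <= \sum_x WnB x B * pX x.

(* minimum cardinality of an eta-quasi image (default value, never a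
   cardinality, when no quasi image exists) *)
Definition gbar (eta : R) : nat :=
  \big[minn/#|[set: n.-tuple Y]|.+1]_(B : {set n.-tuple Y} | quasi_image eta B) #|B|.

Definition min_quasi_image (eta : R) (B : {set n.-tuple Y}) : Prop :=
  quasi_image eta B /\ #|B| = gbar eta.

Definition SY (lam : R) (t s : nat) : {set n.-tuple Y} :=
  [set y | (0 < pY y) && (Num.floor (Num.min (hY y / lam) t%:R) == s%:Z)].

Definition SYcup (lam : R) (t s : nat) : {set n.-tuple Y} :=
  \bigcup_(i < s.+1) SY lam t i.

End Defs.

(* The level floor(min(h_Y(y)/lam, t)) is monotone in h_Y(y) = -log2 p_Y(y), so every
   y in A_s = S_Y(0) u ... u S_Y(s) is strictly more probable than every y outside A_s.
   By an exchange argument, such a top set of p_Y is the only set with at most |A_s|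
   elements and p_Y-mass at least p_Y(A_s); as the eta-quasi images are exactly the
   sets of p_Y-mass at least eta, A_s is the unique minimum eta_s-quasi image and
   gbar(eta_s) = |A_s|.  For s < t each y in A_s has p_Y(y) > 2^-(s+1)lam, whence
   |A_s| < 2^(s+1)lam; for s = t, |A_s| <= |Y|^n < 2^(t lam).  Conversely each y in
   S_Y(s) has p_Y(y) <= 2^-(s lam), whence p_Y(S_Y(s)) <= |A_s| 2^-(s lam). *)

From Pilot Require Import Defs.
From mathcomp Require Import all_boot all_order all_algebra.
From mathcomp Require Import reals exp.
From mathcomp Require Import lra.
Import Order.TTheory GRing.Theory Num.Theory.
Local Open Scope ring_scope.
Set Implicit Arguments. Unset Strict Implicit. Unset Printing Implicit Defensive.

Section TopSet.
Variables (R : realDomainType) (T : finType) (f : T -> R) (A : {set T}).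
Hypothesis f_gt0 : forall y, y \in A -> 0 < f y.
Hypothesis f_sep : forall y z, y \in A -> z \notin A -> f z < f y.

Lemma top_set_threshold :
  exists2 c, 0 <= c & (forall y, y \in A -> c < f y) /\ (forall z, z \notin A -> f z <= c).
Proof.
exists (\big[Order.max/0]_(z | z \notin A) f z); first exact: bigmax_ge_id.
split=> [y yA|z zA]; last exact: le_bigmax_cond.
by apply: bigmax_lt => [|z zA]; [exact: f_gt0 | exact: f_sep].
Qed.

Lemma top_set_eq (B : {set T}) :
  \sum_(y in A) f y <= \sum_(y in B) f y -> (#|B| <= #|A|)%N -> B = A.
Proof.
move=> le_sum le_card; apply/eqP; rewrite eq_sym eqEcard le_card andbT.
apply/subsetPn => -[a aA aNB]; move: le_sum; apply/negP; rewrite -ltNge.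
have [c c_ge0 [gt_c le_c]] := top_set_threshold.
rewrite (big_setID A) [X in _ < X](big_setID B) /= setIC ltrD2l.
have le_card_diff : (#|B :\: A| <= #|A :\: B|)%N.
  by move: le_card; rewrite -(cardsID A B) -(cardsID B A) setIC leq_add2l.
apply: (@le_lt_trans _ _ (c *+ #|A :\: B|)).
  apply: le_trans (ler_wpMn2l c_ge0 le_card_diff).
  by rewrite -sumr_const; apply: ler_sum => z; rewrite inE => /andP[/le_c].
rewrite -sumr_const; apply: ltr_sum => [|y]; last by rewrite inE => /andP[_ /gt_c].
by apply/hasP; exists a; rewrite ?mem_index_enum // inE aA aNB.
Qed.

End TopSet.

Section ExtremeTerm.
Variables (R : realDomainType) (T : finType) (f : T -> R) (S : {set T}) (y0 : T).
Hypothesis y0S : y0 \in S.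

Lemma sum_le_card_max : exists2 y, y \in S & \sum_(x in S) f x <= #|S|%:R * f y.
Proof.
case: (arg_maxP f y0S) => y yS y_max; exists y => //.
by rewrite mulr_natl -sumr_const; apply: ler_sum => x /y_max.
Qed.

Lemma card_min_le_sum : exists2 y, y \in S & #|S|%:R * f y <= \sum_(x in S) f x.
Proof.
case: (arg_minP f y0S) => y yS y_min; exists y => //.
by rewrite mulr_natl -sumr_const; apply: ler_sum => x /y_min.
Qed.

End ExtremeTerm.

Section Log2.
Variable R : realType.

Lemma ln2_gt0 : 0 < ln (2 : R).
Proof. by rewrite ln_gt0 // ltr1n. Qed.

Lemma ler_log2 : {in Num.pos &, {mono @log2 R : x y / x <= y}}.
Proof. by move=> x y x0 y0; rewrite /log2 ler_pM2r ?invr_gt0 ?ln2_gt0 ?ler_ln. Qed.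

Lemma log2M (x y : R) : 0 < x -> 0 < y -> log2 (x * y) = log2 x + log2 y.
Proof. by move=> x0 y0; rewrite /log2 lnM ?posrE // mulrDl. Qed.

Lemma log2_natX (a k : nat) : log2 ((a ^ k)%:R : R) = k%:R * log2 a%:R.
Proof.
case: a => [|a]; last by rewrite natrX /log2 lnXn ?ltr0n // mulr_natl mulrnAl.
case: k => [|k]; first by rewrite expn0 mulr0n mul0r /log2 ln1 mul0r.
by rewrite exp0n // /log2 ln0 // mul0r mulr0.
Qed.

Lemma ler_log2_nat (a b : nat) : (0 < a)%N -> (a <= b)%N -> log2 (a%:R : R) <= log2 b%:R.
Proof.
by move=> a_gt0 le_ab; rewrite ler_log2 ?posrE ?ltr0n ?ler_nat // (leq_trans a_gt0).
Qed.

Lemma log2_nat_ge0 k : 0 <= log2 (k%:R : R).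
Proof.
case: k => [|k]; first by rewrite /log2 ln0 ?mul0r.
by rewrite /log2 divr_ge0 ?ln_ge0 ?(ltW ln2_gt0) // ler1n.
Qed.

End Log2.

Section Channel.
Variables (R : realType) (X Y : finType) (n : nat).
Variables (pX : {ffun n.-tuple X -> R}) (W : X -> Y -> R).

Local Notation pY := (pY pX W).
Local Notation PY := (PY pX W).
Local Notation hY := (hY pX W).

Lemma quasi_imageE eta B : quasi_image pX W eta B = (eta <= PY B).
Proof.
rewrite /quasi_image /Defs.PY /WnB; congr (_ <= _).
under eq_bigr do rewrite mulr_suml.
rewrite exchange_big /=; apply: eq_bigr => y _; apply: eq_bigr => x _.
by rewrite mulrC.
Qed.

Lemma gbar_top_set (A : {set n.-tuple Y}) :
  (forall y, y \in A -> 0 < pY y) ->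
  (forall y z, y \in A -> z \notin A -> pY z < pY y) ->
  gbar pX W (PY A) = #|A|.
Proof.
move=> pY_gt0 pY_sep; apply/eqP; rewrite eqn_leq /gbar -minEnat -!leEnat.
rewrite bigmin_le_cond ?quasi_imageE //=.
apply: le_bigmin => [|B]; first by rewrite leEnat leqW // cardsT max_card.
rewrite quasi_imageE leEnat leqNgt => le_PY; apply/negP => lt_card.
by move: (lt_card); rewrite (top_set_eq pY_gt0 pY_sep le_PY (ltnW lt_card)) ltnn.
Qed.

Hypothesis pX_ge0 : forall x, 0 <= pX x.
Hypothesis pX_sum1 : \sum_x pX x = 1.
Hypothesis W_ge0 : forall a b, 0 <= W a b.
Hypothesis W_sum1 : forall a, \sum_b W a b = 1.

Lemma Wn_ge0 (x : n.-tuple X) (y : n.-tuple Y) : 0 <= Wn W x y.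
Proof. by apply: prodr_ge0 => i _; apply: W_ge0. Qed.

Lemma Wn_sum1 (x : n.-tuple X) : \sum_y Wn W x y = 1.
Proof.
have -> : 1 = \prod_(i < n) \sum_b W (tnth x i) b by rewrite big1.
rewrite bigA_distr_bigA (reindex (fun y : n.-tuple Y => [ffun i => tnth y i])) /=.
  by apply: eq_bigr => y _; apply: eq_bigr => i _; rewrite ffunE.
exists (fun g : {ffun 'I_n -> Y} => [tuple g i | i < n]) => [y _|g _].
  by apply: eq_from_tnth => i; rewrite tnth_mktuple ffunE.
by apply/ffunP => i; rewrite !ffunE tnth_mktuple.
Qed.

Lemma pY_ge0 y : 0 <= pY y.
Proof. by apply: sumr_ge0 => x _; rewrite mulr_ge0 ?Wn_ge0. Qed.

Lemma PY_le1 B : PY B <= 1.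
Proof.
have <- : \sum_y pY y = 1.
  rewrite /Defs.pY exchange_big /= -pX_sum1; apply: eq_bigr => x _.
  by rewrite -mulr_sumr Wn_sum1 mulr1.
by rewrite [leRHS](bigID (mem B)) /= lerDl sumr_ge0 // => y _; apply: pY_ge0.
Qed.

Lemma hY_ge0 y : 0 < pY y -> 0 <= hY y.
Proof.
move=> pY_gt0; rewrite /Defs.hY oppr_ge0 /log2 pmulr_lle0 ?invr_gt0 ?ln2_gt0 //.
by apply: ln_le0; have := PY_le1 [set y]; rewrite /Defs.PY big_set1.
Qed.

End Channel.

Section SelfInformationLevels.
Variables (R : realType) (X Y : finType) (n : nat).
Variables (pX : {ffun n.-tuple X -> R}) (W : X -> Y -> R) (lam : R) (t : nat).
Hypothesis pX_ge0 : forall x, 0 <= pX x.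
Hypothesis pX_sum1 : \sum_x pX x = 1.
Hypothesis W_ge0 : forall a b, 0 <= W a b.
Hypothesis W_sum1 : forall a, \sum_b W a b = 1.
Hypothesis lam_gt0 : 0 < lam.

Local Notation pY := (pY pX W).
Local Notation PY := (PY pX W).
Local Notation hY := (hY pX W).
Local Notation SY := (SY pX W lam t).
Local Notation SYcup := (SYcup pX W lam t).
Local Notation level y := (Num.min (hY y / lam) t%:R).

Lemma mem_SYcup s y : (y \in SYcup s) = (0 < pY y) && (level y < s.+1%:R).
Proof.
apply/bigcupP/andP => [[i _]|[pY_gt0 lt_level]].
  rewrite inE => /andP[-> /eqP floor_level]; split=> //.
  have : Num.floor (level y) < s.+1%:Z by rewrite floor_level ltz_nat ltn_ord.
  by rewrite floor_lt_int.
have [i floor_i] : exists i : nat, Num.floor (level y) = i%:Z.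
  exists `|Num.floor (level y)|%N; rewrite gez0_abs // floor_ge0.
  by rewrite le_min ler0n andbT divr_ge0 ?hY_ge0 ?ltW.
have lt_i : (i < s.+1)%N by rewrite -ltz_nat -floor_i floor_lt_int.
by exists (Ordinal lt_i) => //; rewrite inE pY_gt0 floor_i /=.
Qed.

Lemma SYcup_gt0 s y : y \in SYcup s -> 0 < pY y.
Proof. by rewrite mem_SYcup => /andP[]. Qed.

Lemma SYcup_sep s y z : y \in SYcup s -> z \notin SYcup s -> pY z < pY y.
Proof.
rewrite !mem_SYcup => /andP[pYy_gt0 lt_level] zNA.
rewrite ltNge; apply: contra zNA => le_pY.
have pYz_gt0 := lt_le_trans pYy_gt0 le_pY.
rewrite pYz_gt0 (le_lt_trans _ lt_level) //= le_min !ge_min lexx orbT andbT.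
by apply/orP; left; rewrite ler_pM2r ?invr_gt0 // lerN2 ler_log2 ?posrE.
Qed.

Lemma SY_sub_SYcup s : SY s \subset SYcup s.
Proof. by apply/subsetP => y yS; apply/bigcupP; exists ord_max. Qed.

Lemma log2_pY_SYcup_gt s y : (s < t)%N -> y \in SYcup s ->
  - (s.+1%:R * lam) < log2 (pY y).
Proof.
move=> lt_st; rewrite mem_SYcup gt_min ltr_nat ltnS leqNgt lt_st orbF.
by case/andP=> _; rewrite ltr_pdivrMr // ltrNl.
Qed.

Lemma log2_pY_SY_le s y : y \in SY s -> log2 (pY y) <= - (s%:R * lam).
Proof.
rewrite inE => /andP[_ /eqP floor_level].
have : s%:Z <= Num.floor (level y) by rewrite floor_level.
by rewrite floor_ge_int le_min ler_pdivlMr // lerNr => /andP[].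
Qed.

Lemma log2_card_SYcup_lt s : (s <= t)%N ->
  n%:R * log2 (#|Y|%:R : R) < lam * t%:R -> log2 #|SYcup s|%:R < s.+1%:R * lam.
Proof.
move=> le_st lt_nY.
have [->|[y0 y0A]] := set_0Vmem (SYcup s).
  by rewrite cards0 [log2 _]/log2 ln0 ?mul0r ?mulr_gt0.
have cardA_gt0 : (0 < #|SYcup s|)%N by apply/card_gt0P; exists y0.
have [lt_st|ge_st] := ltnP s t.
  have [y yA le_sum] := card_min_le_sum pY y0A.
  have pY_gt0 := SYcup_gt0 yA.
  have : log2 (#|SYcup s|%:R * pY y) <= log2 1.
    by rewrite ler_log2 ?posrE ?mulr_gt0 ?ltr0n // (le_trans le_sum) ?PY_le1.
  rewrite log2M ?ltr0n // [log2 1]/log2 ln1 mul0r.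
  have := log2_pY_SYcup_gt lt_st yA; lra.
have eq_st : s = t by apply/eqP; rewrite eqn_leq le_st.
subst s.
have : log2 (#|SYcup t|%:R : R) <= log2 ((#|Y| ^ n)%:R).
  by apply: ler_log2_nat; rewrite // -card_tuple max_card.
rewrite log2_natX => /le_lt_trans/(_ lt_nY)/lt_le_trans; apply.
by rewrite mulrC ler_pM2r // ler_nat.
Qed.

Lemma log2_PY_SY_le s : 0 < PY (SY s) ->
  s%:R * lam + log2 (PY (SY s)) <= log2 #|SYcup s|%:R.
Proof.
move=> PY_gt0; have [S0|[y0 y0S]] := set_0Vmem (SY s).
  by rewrite S0 /Defs.PY big_set0 ltxx in PY_gt0.
have [y yS le_max] := sum_le_card_max pY y0S.
have yA := subsetP (SY_sub_SYcup s) y yS.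
have pY_gt0 := SYcup_gt0 yA.
have cardA_gt0 : (0 < #|SYcup s|)%N by apply/card_gt0P; exists y.
have : log2 (PY (SY s)) <= log2 (#|SYcup s|%:R * pY y).
  rewrite ler_log2 ?posrE ?mulr_gt0 ?ltr0n //; apply: le_trans le_max _.
  by rewrite ler_pM2r // ler_nat subset_leq_card ?SY_sub_SYcup.
rewrite log2M ?ltr0n //; have := log2_pY_SY_le yS; lra.
Qed.

End SelfInformationLevels.

Unset Implicit Arguments.

Theorem lemma24 (R : realType) (X Y : finType) (n : nat)
  (pX : {ffun n.-tuple X -> R}) (W : X -> Y -> R) (lam : R) (t : nat) :
  (27 <= n)%N -> (2 <= #|X|)%N -> (2 <= #|Y|)%N ->
  (forall x, 0 <= pX x) -> \sum_x pX x = 1 ->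
  (forall a b, 0 <= W a b) -> (forall a, \sum_b W a b = 1) ->
  0 < lam -> (0 < t)%N -> n%:R * log2 (#|Y|%:R : R) < lam * t%:R ->
  forall s : nat, (s <= t)%N ->
    let A := SYcup pX W lam t s in
    let eta := PY pX W A in
    min_quasi_image pX W eta A /\
    (forall B, min_quasi_image pX W eta B -> B = A) /\
    log2 (gbar pX W eta)%:R < s%:R * lam + lam + log2 (t.+1)%:R /\
    (0 < PY pX W (SY pX W lam t s) ->
       s%:R * lam + log2 (PY pX W (SY pX W lam t s)) <= log2 (gbar pX W eta)%:R).
Proof.
move=> _ _ _ pX_ge0 pX_sum1 W_ge0 W_sum1 lam_gt0 _ lt_nY s le_st A eta.
have A_gt0 := SYcup_gt0 pX_ge0 pX_sum1 W_ge0 W_sum1 lam_gt0 (t := t) (s := s).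
have A_sep := SYcup_sep pX_ge0 pX_sum1 W_ge0 W_sum1 lam_gt0 (t := t) (s := s).
have gbarE : gbar pX W eta = #|A| := gbar_top_set A_gt0 A_sep.
split; [|split; [|split]].
- by split; rewrite ?quasi_imageE ?gbarE.
- move=> B [qB cardB]; apply: (top_set_eq A_gt0 A_sep).
    by rewrite -quasi_imageE.
  by rewrite cardB gbarE.
- have := log2_card_SYcup_lt pX_ge0 pX_sum1 W_ge0 W_sum1 lam_gt0 le_st lt_nY.
  rewrite -natr1 mulrDl mul1r gbarE; have := log2_nat_ge0 R t.+1; lra.
- by move=> PS_gt0; rewrite gbarE; apply: log2_PY_SY_le.
Qed.
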